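(* If a CSCA $\mathbf{a}$ is fractal, then $\mathbf{a}^n$ is fractal for every $n\in\mathbb{N}$, $n\ge 1$.
   Context: $\mathcal{P}$ is the ring of Laurent polynomials in $u$ over $\mathbb{Z}_2$, $\mathcal{R}$ its subring of palindromes ($p(u^{-1})=p(u)$). A CSCA is a $2\times2$ matrix with entries in $\mathcal{R}$ and determinant $1$. A CSCA $\mathbf{a}$ is periodic if $\mathbf{a}^p=\mathbb{1}$ for some $p\ge1$. It has gliders if there exist a non-zero $\xi\in\mathcal{P}^2$ and an integer $k\neq0$ with $\mathbf{a}\xi=u^k\xi$. It is fractal if it is neither periodic nor has gliders. *)

From HB Require Import structures.
From mathcomp Require Import all_boot all_order all_algebra.
Set Implicit Arguments. Unset Strict Implicit. Unset Printing Implicit Defensive.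
Import GRing.Theory.
Local Open Scope ring_scope.

Notation F2 := 'F_2.
(* The ambient field K = Z_2(u) of rational functions in u; the ring P of
   Laurent polynomials is realised as a subring of K. *)
Notation K := {fraction {poly F2}}.

Definition tofracK (p : {poly F2}) : K := FracField.tofrac p.

Definition uK : K := tofracK 'X.

Definition laurent (x : K) : Prop :=
  exists (p : {poly F2}) (k : nat), x = tofracK p / uK ^+ k.

Definition subinv (p : {poly F2}) : K :=
  (map_poly (fun c : F2 => tofracK c%:P) p).[uK^-1].

(* x in R: a Laurent polynomial x = p(u) u^{-k} with x(u^{-1}) = x,
   where x(u^{-1}) = p(u^{-1}) u^{k} *)
Definition palindrome (x : K) : Prop :=
  exists (p : {poly F2}) (k : nat),
    x = tofracK p / uK ^+ k /\ subinv p * uK ^+ k = x.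

Definition CSCA (a : 'M[K]_2) : Prop :=
  (forall i j, palindrome (a i j)) /\ \det a = 1.

Definition periodic (a : 'M[K]_2) : Prop :=
  exists p : nat, (1 <= p)%N /\ a ^+ p = 1.

Definition has_gliders (a : 'M[K]_2) : Prop :=
  exists (xi : 'cV[K]_2) (k : int),
    (forall i, laurent (xi i 0)) /\ xi != 0 /\ k != 0 /\
    a *m xi = (uK ^ k) *: xi.

Definition fractal (a : 'M[K]_2) : Prop :=
  ~ periodic a /\ ~ has_gliders a.

From HB Require Import structures.
From mathcomp Require Import all_boot all_order all_algebra.
Import GRing.Theory.
Set Implicit Arguments.
Unset Strict Implicit.
Unset Printing Implicit Defensive.
Local Open Scope ring_scope.

(* A period of a^n gives a period of a.  If a^n xi = u^k xi with k != 0, then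
   a^n is not the scalar u^k (its determinant would be u^(2k) != 1), so the
   u^k-eigenline of a^n is spanned by xi.  Since a commutes with a^n it
   preserves this line: xi is an eigenvector of a, for an eigenvalue l with
   l^n = u^k.  Writing l = P/Q in Z_2(u) gives P^n = Q^n u^k (for k >= 0; the
   case k < 0 follows by inverting l), and comparing degrees together with the
   injectivity of n-th powers in Z_2[u] yields l = u^m, so xi is a glider of a. *)

Lemma tofrac_quotient (R : idomainType) (x : {fraction R}) :
  exists p q : R, q != 0 /\ x = FracField.tofrac p / FracField.tofrac q.
Proof.
elim/quotW: x => r; exists (frac r).1, (frac r).2; split; first exact: denom_ratioP.
have d0 := denom_ratioP r.
apply: (mulIf (_ : FracField.tofrac (frac r).2 != 0)); first by rewrite tofrac_eq0.
rewrite divfK ?tofrac_eq0 // /FracField.tofrac; unlock.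
rewrite -[_ * _]FracField.pi_mul; apply/eqmodP.
rewrite /= FracField.equivfE /FracField.mulf.
by rewrite !numden_Ratio ?mulf_neq0 ?oner_neq0 // !mulr1 mulrC.
Qed.

Lemma ord2P (i : 'I_2) : i = 0 \/ i = 1.
Proof. by case: i => -[|[|]] // ?; [left | right]; apply: val_inj. Qed.

Lemma mulmx_expr_eigen (R : comNzRingType) m (A : 'M[R]_m) (x : 'cV[R]_m) l n :
  A *m x = l *: x -> A ^+ n *m x = l ^+ n *: x.
Proof.
move=> Ax; elim: n => [|n IHn]; first by rewrite expr0 mul1mx scale1r.
by rewrite exprS -mulmxE -mulmxA IHn -scalemxAr Ax scalerA -exprSr.
Qed.

Lemma det_expr (R : comNzRingType) m (A : 'M[R]_m) n : \det (A ^+ n) = \det A ^+ n.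
Proof.
elim: n => [|n IHn]; first by rewrite !expr0 det1.
by rewrite !exprS -mulmxE det_mulmx IHn.
Qed.

Section TwoByTwo.

Variable F : fieldType.

Lemma det_row_mx2 (x y : 'cV[F]_2) :
  \det (row_mx x y) = x 0 0 * y 1 0 - x 1 0 * y 0 0.
Proof.
have l i : row_mx x y i 0 = x i 0.
  by rewrite -(row_mxEl x y i 0); congr (row_mx x y i _); apply: val_inj.
have r i : row' i (col' 0 (row_mx x y)) 0 0 = y (lift i 0) 0.
  rewrite -(row_mxEr x y _ 0) [LHS]mxE [LHS]mxE.
  by congr (row_mx x y _ _); apply: val_inj.
rewrite (expand_det_col _ 0) !big_ord_recl big_ord0 /cofactor !det_mx11 !l !r.
have -> : lift ord0 0 = 1 :> 'I_2 by apply: val_inj.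
have -> : lift 1 0 = 0 :> 'I_2 by apply: val_inj.
by rewrite /= expr0 expr1 mul1r mulN1r mulrN addr0.
Qed.

Lemma colinear_cV2 (x y : 'cV[F]_2) :
  x != 0 -> \det (row_mx x y) = 0 -> exists c, y = c *: x.
Proof.
rewrite det_row_mx2 => /matrix0Pn[i [j0]]; rewrite (ord1 j0) => xi0 /eqP.
rewrite subr_eq0 => /eqP cross.
have cross_ij k : x i 0 * y k 0 = x k 0 * y i 0.
  by case: (ord2P i) (ord2P k) => -> [] ->; rewrite // cross mulrC [RHS]mulrC.
exists (y i 0 / x i 0); apply/matrixP => k j; rewrite (ord1 j) mxE.
by apply: (mulfI xi0); rewrite cross_ij mulrA [x i 0 * _]mulrC divfK // mulrC.
Qed.

Lemma scalar_mx_of_eigenbasis (A : 'M[F]_2) (x y : 'cV[F]_2) c :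
  \det (row_mx x y) != 0 -> A *m x = c *: x -> A *m y = c *: y -> A = c%:M.
Proof.
move=> det0 Ax Ay; have uM : row_mx x y \in unitmx by rewrite unitmxE unitfE.
apply: (can_inj (mulmxK uM)).
by rewrite (@mul_mx_row _ _ _ 1 1) Ax Ay mul_scalar_mx (@scale_row_mx _ _ 1 1).
Qed.

Lemma eigenvector_of_power (A : 'M[F]_2) (x : 'cV[F]_2) n c :
  x != 0 -> A ^+ n *m x = c *: x -> A ^+ n != c%:M ->
  exists l, A *m x = l *: x.
Proof.
move=> x0 Anx nscalar.
have Any : A ^+ n *m (A *m x) = c *: (A *m x).
  rewrite mulmxA -[A ^+ n *m A]/(A ^+ n * A) -exprSr exprS.
  by rewrite -[A * A ^+ n]/(A *m A ^+ n) -mulmxA Anx scalemxAr.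
have [det0 | det_neq0] := eqVneq (\det (row_mx x (A *m x))) 0.
  exact: colinear_cV2 x0 det0.
by case/eqP: nscalar; exact: scalar_mx_of_eigenbasis det_neq0 Anx Any.
Qed.

End TwoByTwo.

Lemma F2_neq0_eq1 (c : F2) : c != 0 -> c = 1.
Proof. by case: c => -[|[|]] //= ? _; apply: val_inj. Qed.

Lemma polyF2_monic (p : {poly F2}) : p != 0 -> p \is monic.
Proof. by move=> p0; rewrite monicE (@F2_neq0_eq1 (lead_coef p)) ?lead_coef_eq0. Qed.

Lemma polyF2_expr_inj n (p q : {poly F2}) : (0 < n)%N -> p ^+ n = q ^+ n -> p = q.
Proof.
move=> n_gt0 pq; have [p0 | p0] := eqVneq p 0.
  move: pq; rewrite p0 expr0n (gtn_eqF n_gt0) => /esym/eqP.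
  by rewrite expf_eq0 n_gt0 => /eqP.
have q0 : q != 0 by move: (expf_neq0 n p0); rewrite pq expf_eq0 n_gt0.
apply/eqP; rewrite -eqp_monic ?inE ?polyF2_monic //.
by rewrite /eqp -(dvdp_pexp2r p q n_gt0) -(dvdp_pexp2r q p n_gt0) pq dvdpp.
Qed.

Lemma polyF2_expr_eq_mulXn n j (p q : {poly F2}) : (0 < n)%N -> q != 0 ->
  p ^+ n = q ^+ n * 'X^j -> exists d, p = q * 'X^d.
Proof.
move=> n_gt0 q0 pq.
have sizes : ((size p).-1 * n = j + (size q).-1 * n)%N.
  have : (0 < size (q ^+ n))%N by rewrite size_poly_gt0 expf_neq0.
  rewrite -!size_exp pq size_mulXn ?expf_neq0 //.
  by case: (size _) => // s _; rewrite addnS.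
exists ((size p).-1 - (size q).-1)%N; apply: (polyF2_expr_inj n_gt0).
by rewrite exprMn -exprM mulnBl sizes addnK.
Qed.

Lemma uK_expr (j : nat) : uK ^+ j = tofracK 'X^j.
Proof. by rewrite /uK /tofracK tofracXn. Qed.

Lemma uK_exprz_eq1 (k : int) : uK ^ k = 1 -> k = 0.
Proof.
have uK_expr_neq1 j : uK ^+ j.+1 != 1.
  rewrite uK_expr -tofrac1 tofrac_eq.
  by apply/eqP => /(congr1 (size : {poly F2} -> nat)); rewrite size_polyXn size_poly1.
case: k => [[|j]|j] E //; case/eqP: (uK_expr_neq1 j) => //.
by apply: invr_inj; rewrite invr1; exact: E.
Qed.

Lemma uK_root_expr n j (l : K) : (0 < n)%N -> l ^+ n = uK ^+ j ->
  exists d : nat, l = uK ^+ d.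
Proof.
move=> n_gt0 ln; have [p [q [q0 lpq]]] := tofrac_quotient l.
have q0' : FracField.tofrac q != 0 by rewrite tofrac_eq0.
have pq : p ^+ n = q ^+ n * 'X^j.
  apply/eqP; rewrite -tofrac_eq tofracM !tofracXn -[FracField.tofrac 'X]/uK.
  by rewrite -ln lpq expr_div_n mulrC divfK ?expf_neq0.
have [d pd] := polyF2_expr_eq_mulXn n_gt0 q0 pq.
by exists d; rewrite lpq pd tofracM tofracXn mulrAC divff ?mul1r.
Qed.

Lemma uK_root_exprz n (k : int) (l : K) : (0 < n)%N -> l ^+ n = uK ^ k ->
  exists m : int, l = uK ^ m.
Proof.
move=> n_gt0; case: k => j ln.
  by have [d ->] := uK_root_expr n_gt0 ln; exists d.
have /(uK_root_expr n_gt0)[d ld] : l^-1 ^+ n = uK ^+ j.+1 by rewrite exprVn ln invrK.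
by exists (- d%:Z); rewrite -invr_expz -[uK ^ d%:Z]/(uK ^+ d) -ld invrK.
Qed.

Lemma expr_neq_scalar_uK (a : 'M[K]_2) n (k : int) :
  \det a = 1 -> k != 0 -> a ^+ n != (uK ^ k)%:M.
Proof.
move=> deta k0; apply: contra_neq k0 => ank.
have : uK ^ (k * 2) = 1.
  by rewrite -exprz_exp -[_ ^ 2]/(_ ^+ 2) -det_scalar -ank det_expr deta expr1n.
by move/uK_exprz_eq1/eqP; rewrite mulf_eq0 orbF => /eqP.
Qed.

Theorem mainTheorem7 (a : 'M[{fraction {poly 'F_2}}]_2) :
  CSCA a -> fractal a -> forall n : nat, (1 <= n)%N -> fractal (a ^+ n).
Proof.
move=> [_ deta] [aper aglide] n n_gt0; split.
  case=> p [p_gt0 anp]; apply: aper; exists (n * p)%N.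
  by rewrite muln_gt0 n_gt0 p_gt0 exprM.
case=> xi [k [xiL [xi0 [k0 anxi]]]]; apply: aglide.
have [l axi] := eigenvector_of_power xi0 anxi (expr_neq_scalar_uK n deta k0).
have ln : l ^+ n = uK ^ k.
  have : (l ^+ n - uK ^ k) *: xi = 0.
    by rewrite scalerBl -(mulmx_expr_eigen n axi) anxi subrr.
  by move/eqP; rewrite scaler_eq0 subr_eq0 (negbTE xi0) orbF => /eqP.
have [m lm] := uK_root_exprz n_gt0 ln.
exists xi, m; split=> //; split=> //; split; last by rewrite axi lm.
apply: contra_neq k0 => m0; apply: uK_exprz_eq1.
by rewrite -ln lm m0 expr0z expr1n.
Qed.
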